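(* For each $\mathrm{X}\in\{\mathbf{O},\mathbf{SO},\mathbf{R}\}$, the $\mathrm{X}$-chase is hereditary: for any factbase $F$, any set of existential rules $\mathcal R$, any $\mathrm{X}$-chase derivation $\mathcal D$ from $F$ and $\mathcal R$, and any $F'\subseteq F$, the restriction $\mathcal D_{|F'}$ of $\mathcal D$ induced by $F'$ is an $\mathrm{X}$-chase derivation.
   Context: First-order setting with constants and variables, no function symbols; a factbase is a set of atoms; a homomorphism from $A$ to $B$ is a substitution $\pi$ with $\pi(A)\subseteq B$. An existential rule $R=(B,H)$ is $\forall\bar x\forall\bar y(B(\bar x,\bar y)\to\exists\bar z\,H(\bar x,\bar z))$; its frontier is $\bar x$. A trigger $(R,\pi)$ on $F$ has $\pi:B\to F$ a homomorphism; $\pi^s$ maps each existential variable $z$ to a fresh variable $z_{(R,\pi)}$; $F\cup\pi^s(H)$ is the immediate derivation. A derivation from $F$ and $\mathcal R$ is a (possibly infinite) sequence $D_0=(\emptyset,\emptyset,F)$, $D_i=(R_i,\pi_i,F_i)$, $F_i$ the immediate derivation from $F_{i-1}$ through $(R_i,\pi_i)$, triggers pairwise distinct. For a derivation with last factbase $F_n$, a trigger $(R,\pi)$ is: $\mathbf{O}$-applicable if $\pi:B\to F_n$ is a homomorphism; $\mathbf{SO}$-applicable if moreover no trigger $(R,\pi')$ already in the derivation has $\pi'$ equal to $\pi$ on the frontier of $R$; $\mathbf{R}$-applicable if $\pi:B\to F_n$ is a homomorphism not extendable to a homomorphism $B\cup H\to F_n$. An $\mathbf{O}$-chase derivation is any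 derivation; an $\mathbf{SO}$- (resp. $\mathbf{R}$-) chase derivation is one where each trigger is $\mathbf{SO}$- (resp. $\mathbf{R}$-) applicable on its prefix. For $G\subseteq F$, the restriction $\mathcal D_{|G}$ is the maximal derivation from $G$ and $\mathcal R$ whose trigger sequence is a subsequence of the trigger sequence of $\mathcal D$. *)

From mathcomp Require Import all_boot.
Require Stdlib.Lists.List.

Set Implicit Arguments.
Unset Strict Implicit.
Unset Printing Implicit Defensive.

Inductive term (C V : Type) : Type :=
| TCst of C
| TVar of V.
Arguments TCst {C V} _.
Arguments TVar {C V} _.

Record atom (P C V : Type) := Atom { apred : P ; aargs : list (term C V) }.

Definition factbase (P C V : Type) := atom P C V -> Prop.

Record rule (P C V : Type) := Rule { body : list (atom P C V) ;
                                     head : list (atom P C V) }.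

Definition subst (C V : Type) := V -> term C V.

Definition term_var {C V : Type} (t : term C V) : option V :=
  match t with TVar v => Some v | TCst _ => None end.

Definition atoms_vars {P C : Type} {V : Type} (A : list (atom P C V)) : seq V :=
  flatten (map (fun a => pmap term_var (aargs a)) A).

Definition frontier {P C : Type} {V : eqType} (R : rule P C V) (v : V) : bool :=
  (v \in atoms_vars (body R)) && (v \in atoms_vars (head R)).

Definition apply_term {C V : Type} (s : subst C V) (t : term C V) : term C V :=
  match t with TCst c => TCst c | TVar v => s v end.

Definition apply_atom {P C V : Type} (s : subst C V) (a : atom P C V) : atom P C V :=
  Atom (apred a) (map (apply_term s) (aargs a)).

Definition hom {P C V : Type} (s : subst C V) (A : list (atom P C V))
  (F : factbase P C V) : Prop :=
  forall a, List.In a A -> F (apply_atom s a).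

Definition trigger (P C V : Type) := (rule P C V * subst C V)%type.

(* Naming of fresh variables: z ↦ z_(R,π).  The theorem is stated for an
   arbitrary naming function. *)
Definition naming (P C V : Type) := rule P C V -> subst C V -> V -> V.

(* π^s : frontier (body) variables are mapped by π, existential variables z
   are mapped to the fresh variable z_(R,π). *)
Definition safe_subst {P C : Type} {V : eqType} (nm : naming P C V)
  (R : rule P C V) (pi : subst C V) : subst C V :=
  fun v => if v \in atoms_vars (body R) then pi v else TVar (nm R pi v).

Definition trigger_output {P C : Type} {V : eqType} (nm : naming P C V)
  (t : trigger P C V) : factbase P C V :=
  fun a => exists h, List.In h (head t.1) /\ a = apply_atom (safe_subst nm t.1 t.2) h.

(* A (possibly infinite) trigger sequence: ts n = Some t is the (n+1)-th
   trigger; ts n = None means the derivation has length <= n. *)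
Definition tseq (P C V : Type) := nat -> option (trigger P C V).

Fixpoint fb {P C : Type} {V : eqType} (nm : naming P C V) (F : factbase P C V)
  (ts : tseq P C V) (n : nat) : factbase P C V :=
  match n with
  | 0 => F
  | n'.+1 => fun a => fb nm F ts n' a \/
                      match ts n' with
                      | Some t => trigger_output nm t a
                      | None => False
                      end
  end.

Definition same_trigger {P C : Type} {V : eqType} (t t' : trigger P C V) : Prop :=
  t.1 = t'.1 /\ forall v, v \in atoms_vars (body t.1) -> t.2 v = t'.2 v.

Definition derivation {P C : Type} {V : eqType} (Rs : rule P C V -> Prop)
  (nm : naming P C V) (F : factbase P C V) (ts : tseq P C V) : Prop :=
  [/\ (forall n, ts n = None -> ts n.+1 = None),
      (forall n t, ts n = Some t -> Rs t.1 /\ hom t.2 (body t.1) (fb nm F ts n))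
    & (forall m n t t', m <> n -> ts m = Some t -> ts n = Some t' ->
                        ~ same_trigger t t')].

Definition O_applicable {P C : Type} {V : eqType} (nm : naming P C V)
  (F : factbase P C V) (ts : tseq P C V) (n : nat) (t : trigger P C V) : Prop :=
  hom t.2 (body t.1) (fb nm F ts n).

Definition SO_applicable {P C : Type} {V : eqType} (nm : naming P C V)
  (F : factbase P C V) (ts : tseq P C V) (n : nat) (t : trigger P C V) : Prop :=
  O_applicable nm F ts n t /\
  forall m t', m < n -> ts m = Some t' ->
    ~ (t'.1 = t.1 /\ forall x, frontier t.1 x -> t'.2 x = t.2 x).

Definition R_applicable {P C : Type} {V : eqType} (nm : naming P C V)
  (F : factbase P C V) (ts : tseq P C V) (n : nat) (t : trigger P C V) : Prop :=
  O_applicable nm F ts n t /\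
  ~ (exists pi' : subst C V,
        (forall v, v \in atoms_vars (body t.1) -> pi' v = t.2 v) /\
        hom pi' (body t.1 ++ head t.1) (fb nm F ts n)).

Inductive chase_variant := Ochase | SOchase | Rchase.

Definition applicable {P C : Type} {V : eqType} (X : chase_variant)
  (nm : naming P C V) (F : factbase P C V) (ts : tseq P C V) (n : nat)
  (t : trigger P C V) : Prop :=
  match X with
  | Ochase => O_applicable nm F ts n t
  | SOchase => SO_applicable nm F ts n t
  | Rchase => R_applicable nm F ts n t
  end.

Definition chase_derivation {P C : Type} {V : eqType} (X : chase_variant)
  (Rs : rule P C V -> Prop) (nm : naming P C V) (F : factbase P C V)
  (ts : tseq P C V) : Prop :=
  derivation Rs nm F ts /\
  forall n t, ts n = Some t -> applicable X nm F ts n t.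

Definition trig_subseq {P C V : Type} (ts' ts : tseq P C V) : Prop :=
  exists f : nat -> nat, (forall i j, i < j -> f i < f j) /\
    forall i t, ts' i = Some t -> ts (f i) = Some t.

(* (G, ts') is the restriction D_|G of the derivation with trigger sequence ts:
   a maximal derivation from G whose trigger sequence is a subsequence of ts. *)
Definition restriction {P C : Type} {V : eqType} (Rs : rule P C V -> Prop)
  (nm : naming P C V) (ts : tseq P C V) (G : factbase P C V)
  (ts' : tseq P C V) : Prop :=
  [/\ derivation Rs nm G ts', trig_subseq ts' ts
    & forall ts'', derivation Rs nm G ts'' -> trig_subseq ts'' ts ->
                   trig_subseq ts' ts'' -> trig_subseq ts'' ts'].

From mathcomp Require Import all_boot.

Set Implicit Arguments.
Unset Strict Implicit.
Unset Printing Implicit Defensive.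

(* The trigger sequence of D_|F' embeds into that of D along a strictly
   increasing f, so the n-th trigger of D_|F' is the (f n)-th trigger of D,
   fired there on a factbase F_(f n) containing F'_n.  Being a derivation
   already gives O-applicability; the SO condition on the prefix of length n
   is implied by the one on the longer prefix of length f n; and an extension
   of pi to B u H into F'_n would also land in F_(f n), contradicting
   R-applicability in D. *)

Section Monotonicity.
Variables (P C : Type) (V : eqType) (nm : naming P C V).

Lemma fb_monotone (F : factbase P C V) ts m n a :
  m <= n -> fb nm F ts m a -> fb nm F ts n a.
Proof.
elim: n => [|n IH]; first by rewrite leqn0 => /eqP->.
rewrite leq_eqVlt ltnS => /predU1P[-> //|le_mn] Fa.
by left; apply: IH.
Qed.

Lemma hom_weaken (s : subst C V) A (F G : factbase P C V) :
  (forall a, F a -> G a) -> hom s A F -> hom s A G.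
Proof. by move=> FG homF a inA; apply/FG/homF. Qed.

End Monotonicity.

Section Embedding.
Variables (P C : Type) (V : eqType) (nm : naming P C V).
Variables (F F' : factbase P C V) (ts ts' : tseq P C V) (f : nat -> nat).
Hypothesis sub_F'F : forall a, F' a -> F a.
Hypothesis f_incr : forall i j, i < j -> f i < f j.
Hypothesis ts'_embed : forall i t, ts' i = Some t -> ts (f i) = Some t.

Lemma fb_embed n a : fb nm F' ts' n a -> fb nm F ts (f n) a.
Proof.
elim: n a => [|n IH] a /=.
  by move=> /sub_F'F; apply: (fb_monotone (leq0n _)).
have le_fn : (f n).+1 <= f n.+1 by apply: f_incr.
case=> [/IH|]; first by apply: fb_monotone; apply: ltnW.
case E: (ts' n) => [t|] // out_a.
by apply: fb_monotone le_fn _; right; rewrite (ts'_embed E).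
Qed.

Lemma SO_applicable_embed n t :
  O_applicable nm F' ts' n t -> SO_applicable nm F ts (f n) t ->
  SO_applicable nm F' ts' n t.
Proof.
move=> appO [_ no_twin]; split=> // m t' lt_mn /ts'_embed.
exact/no_twin/f_incr.
Qed.

Lemma R_applicable_embed n t :
  O_applicable nm F' ts' n t -> R_applicable nm F ts (f n) t ->
  R_applicable nm F' ts' n t.
Proof.
move=> appO [_ no_ext]; split=> // -[pi' [agree hom_n]].
apply: no_ext; exists pi'; split=> //.
exact: hom_weaken (@fb_embed n) hom_n.
Qed.

Lemma applicable_embed X n t :
  O_applicable nm F' ts' n t -> applicable X nm F ts (f n) t ->
  applicable X nm F' ts' n t.
Proof.
case: X => /= appO; [by [] | exact: SO_applicable_embed | exact: R_applicable_embed].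
Qed.

End Embedding.

Theorem proposition3 (P C : Type) (V : eqType) (X : chase_variant)
  (Rs : rule P C V -> Prop) (nm : naming P C V)
  (F : factbase P C V) (ts : tseq P C V)
  (F' : factbase P C V) (ts' : tseq P C V) :
  chase_derivation X Rs nm F ts ->
  (forall a, F' a -> F a) ->
  restriction Rs nm ts F' ts' ->
  chase_derivation X Rs nm F' ts'.
Proof.
move=> [_ appX] sub_F'F [der' [f [f_incr ts'_embed]] _].
split=> // n t E.
have appO : O_applicable nm F' ts' n t by case: der' => _ /(_ n t E) [].
exact: (applicable_embed sub_F'F f_incr ts'_embed appO (appX _ _ (ts'_embed _ _ E))).
Qed.
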